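(* Let $v\ge4$ be an integer with $v\not\equiv 2\pmod 4$. Then an optimum $(d,2)$-CDA$((d+1)v^2;6,v)$ exists for every positive integer $d$ with $d+1\le v$.
   Context: Consecutive $t$-way interaction in an $N\times k$ array $A=(a_{ij})$ over a $v$-set $V$: $T=\{(i,x_i),\dots,(i+t-1,x_{i+t-1})\}$, $1\le i\le k-t+1$, $x_r\in V$; $\rho(A,T)=\{r: a_{r,j}=x_j\ \forall (j,x_j)\in T\}$, $\rho(A,\mathcal T)=\bigcup_{T\in\mathcal T}\rho(A,T)$. A $(d,t)$-CDA$(N;k,v)$ is an $N\times k$ array over $V$ in which every $t$ consecutive columns contain every $t$-tuple at least once, and such that for every set $\mathcal T$ of exactly $d$ distinct consecutive $t$-way interactions and every consecutive $t$-way interaction $T$: $\rho(A,T)\subseteq\rho(A,\mathcal T)$ iff $T\in\mathcal T$. It is optimum if $N=(d+1)v^t$. *)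

From HB Require Import structures.
From mathcomp Require Import all_boot all_order all_algebra.
Set Implicit Arguments. Unset Strict Implicit. Unset Printing Implicit Defensive.

(* A consecutive t-way interaction: a starting column i (0 <= i <= k-t)
   together with the values x_0..x_{t-1} required in columns i..i+t-1. *)
Definition interaction (k t v : nat) : finType :=
  ('I_(k - t + 1) * {ffun 'I_t -> 'I_v})%type.

Definition rho (N k v t : nat) (A : 'M['I_v]_(N, k)) (T : interaction k t v)
  : {set 'I_N} :=
  [set r : 'I_N | [forall j : 'I_t,
     match (insub (T.1 + j)%N : option 'I_k) with
     | Some c => A r c == T.2 j
     | None => false
     end]].

Definition rhoS (N k v t : nat) (A : 'M['I_v]_(N, k))
  (S : {set interaction k t v}) : {set 'I_N} :=
  \bigcup_(T in S) rho A T.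

Definition isCDA (d t N k v : nat) (A : 'M['I_v]_(N, k)) : Prop :=
  (forall T : interaction k t v, rho A T != set0) /\
  (forall (S : {set interaction k t v}) (T : interaction k t v),
      #|S| = d -> (rho A T \subset rhoS A S) = (T \in S)).

Definition isOptimumCDA (d t N k v : nat) (A : 'M['I_v]_(N, k)) : Prop :=
  isCDA d t A /\ N = (d + 1) * v ^ t.

From HB Require Import structures.
From mathcomp Require Import all_boot all_order all_algebra.
From mathcomp Require Import finfield zify.
Import GRing.Theory.

Set Implicit Arguments.
Unset Strict Implicit.
Unset Printing Implicit Defensive.

(* Start from a "layered array": |V|^3 rows, six columns and a hidden layer
   coordinate, such that any two consecutive columns together with the layer
   determine the row, and two rows agree in at most one pair of consecutive
   columns among two distinct positions.  Keeping the rows of d+1 layers, each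
   consecutive 2-way interaction is covered by exactly d+1 rows and two
   distinct interactions share at most one row, so d interactions cannot cover
   the rows of another one.
   Layered arrays come from the linear forms x, y, z, x+z, x+y, z+lam x (with
   layer x+y+z) over a finite ring in which lam and lam-1 are units: Z/m for
   m odd (lam = 2) and GF(2^a) for a >= 2.  Products of layered arrays are
   layered, and v = 2^a m with m odd and a <> 1 exactly when v is not 2 mod 4. *)

Lemma ord2P (j : 'I_2) : j = ord0 \/ j = ord_max.
Proof. by case: j => [[|[|//]] ?]; [left | right]; apply: val_inj. Qed.

Lemma forall_ord2 (P : 'I_2 -> bool) : [forall j, P j] = P ord0 && P ord_max.
Proof.
apply/forallP/andP => [P_all | [P0 P1] j]; first by split; apply: P_all.
by case: (ord2P j) => ->.
Qed.

Lemma almost_disjoint_subset_bigcup (I X : finType) (F : I -> {set X})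
    (S : {set I}) (i : I) :
  (forall j, j != i -> #|F i :&: F j| <= 1) -> #|S| < #|F i| ->
  (F i \subset \bigcup_(j in S) F j) = (i \in S).
Proof.
move=> meet_le1 ltSFi; apply/idP/idP => [sub | /bigcup_sup//].
apply: contraLR ltSFi => iNS; rewrite -leqNgt.
pose cover x := odflt i [pick j in S | x \in F j].
have coverP x : x \in F i -> cover x \in S /\ x \in F (cover x).
  move=> /(subsetP sub) /bigcupP[j jS xFj].
  rewrite /cover; case: pickP => [k /andP[] // | /(_ j)].
  by rewrite jS xFj.
rewrite -(card_in_imset (f := cover)); last first.
  move=> x y xFi yFi eq_cov; have [covS xF] := coverP x xFi.
  have [_ yF] := coverP y yFi; rewrite -eq_cov in yF.
  have /meet_le1 /card_le1_eqP : cover x != i by apply: contraNneq iNS => <-.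
  by apply; rewrite inE ?xFi ?yFi.
by apply/subset_leq_card/subsetP => _ /imsetP[x /coverP[]] ? _ ->.
Qed.

Record layered_array (V : finType) := LayeredArray {
  rows : finType;
  entry : nat -> rows -> V;
  layer : rows -> V;
  card_rows : #|rows| = #|V| ^ 3;
  entry_layer_inj : forall i, i < 5 ->
    injective (fun r => (entry i r, entry i.+1 r, layer r));
  entry_pairs_inj : forall i j, i < j -> j < 5 ->
    injective (fun r => (entry i r, entry i.+1 r, entry j r, entry j.+1 r)) }.

Arguments entry {V} l k r.
Arguments layer {V} l r.
Arguments card_rows {V} l.
Arguments entry_layer_inj {V} l {i}.
Arguments entry_pairs_inj {V} l {i j}.

Lemma entry_layer_onto (V : finType) (L : layered_array V) i (t : V * V * V) :
  i < 5 -> exists r, (entry L i r, entry L i.+1 r, layer L r) = t.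
Proof.
move=> lti5; have card_le : #|{: V * V * V}| <= #|rows L|.
  by rewrite card_rows !card_prod -!mulnA.
by have /codomP[r ->] := inj_card_onto (entry_layer_inj L lti5) card_le t; exists r.
Qed.

Section CDAFromLayers.

Variables (v d : nat) (L : layered_array 'I_v) (D : {set 'I_v}).
Hypothesis card_D : #|D| = d + 1.

Let N := (d + 1) * v ^ 2.

Definition chosen_rows : {set rows L} := [set r | layer L r \in D].

Lemma card_chosen_rows : #|chosen_rows| = N.
Proof.
pose f r := (entry L 0 r, entry L 1 r, layer L r).
rewrite -(card_imset _ (entry_layer_inj L (isT : 0 < 5))) -/f.
have -> : f @: chosen_rows = setX [set: 'I_v * 'I_v] D.
  apply/setP => t; rewrite !inE /=; apply/imsetP/idP => [[r] | t_D].
    by rewrite inE => r_D ->.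
  have [r r_t] := entry_layer_onto L t (isT : 0 < 5).
  by exists r; rewrite -?r_t // inE; move: t_D; rewrite -r_t.
by rewrite cardsX cardsT card_prod card_ord card_D mulnC.
Qed.

Definition chosen_row (r : 'I_N) : rows L :=
  enum_val (A := mem chosen_rows) (cast_ord (esym card_chosen_rows) r).

Lemma chosen_row_inj : injective chosen_row.
Proof. by move=> r s /enum_val_inj /cast_ord_inj. Qed.

Lemma chosen_rowP r : chosen_row r \in chosen_rows.
Proof. exact: enum_valP. Qed.

Lemma chosen_row_onto p : p \in chosen_rows -> exists r, chosen_row r = p.
Proof.
move=> p_chosen; exists (cast_ord card_chosen_rows (enum_rank_in p_chosen p)).
by rewrite /chosen_row cast_ordK enum_rankK_in.
Qed.

Definition layers_cda : 'M['I_v]_(N, 6) := \matrix_(r, k) entry L k (chosen_row r).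

Lemma mem_rho_layers (T : interaction 6 2 v) r :
  (r \in rho layers_cda T) =
  (entry L T.1 (chosen_row r) == T.2 ord0) &&
  (entry L T.1.+1 (chosen_row r) == T.2 ord_max).
Proof.
have cellE (j : 'I_2) x : match insub (T.1 + j) : option 'I_6 with
    | Some c => layers_cda r c == x | None => false end
  = (entry L (T.1 + j) (chosen_row r) == x).
  case: insubP => [c _ <- | ]; first by rewrite mxE.
  by have := ltn_ord T.1; have := ltn_ord j; lia.
by rewrite inE forall_ord2 !cellE addn0 [T.1 + _]addn1.
Qed.

Lemma card_rho_layers (T : interaction 6 2 v) : #|rho layers_cda T| = d + 1.
Proof.
case: T => i f; pose lay := layer L \o chosen_row.
have lay_rho : lay @: rho layers_cda (i, f) = D.
  apply/setP => s; apply/imsetP/idP => [[r _ ->] | s_D].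
    by have := chosen_rowP r; rewrite inE.
  have [p [p0 p1 ps]] := entry_layer_onto L (f ord0, f ord_max, s) (ltn_ord i).
  have [|r r_p] := chosen_row_onto (p := p); first by rewrite inE ps.
  by exists r; rewrite ?mem_rho_layers /lay /= r_p ?p0 ?p1 ?ps ?eqxx.
rewrite -card_D -lay_rho card_in_imset // => r s; rewrite !mem_rho_layers /lay /=.
move=> /andP[/eqP r0 /eqP r1] /andP[/eqP s0 /eqP s1] eq_layer.
apply/chosen_row_inj/(entry_layer_inj L (ltn_ord i)).
by rewrite /= r0 r1 s0 s1 eq_layer.
Qed.

Lemma card_rhoI_layers (T T' : interaction 6 2 v) :
  T != T' -> #|rho layers_cda T :&: rho layers_cda T'| <= 1.
Proof.
wlog le_TT' : T T' / T.1 <= T'.1.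
  move=> sym neqTT'; case: (leqP T.1 T'.1) => [|/ltnW] le; first exact: sym.
  by rewrite setIC sym // eq_sym.
case: T T' le_TT' => [i f] [i' f'] /= le_ii' neqTT'.
apply/card_le1_eqP => r s; rewrite !in_setI !mem_rho_layers /=.
move=> /andP[/andP[/eqP rf0 /eqP rf1] /andP[/eqP rf'0 /eqP rf'1]].
move=> /andP[/andP[/eqP sf0 /eqP sf1] /andP[/eqP sf'0 /eqP sf'1]].
case: ltngtP le_ii' => // [lt_ii' _ | /val_inj eq_ii' _].
  apply/chosen_row_inj/(entry_pairs_inj L lt_ii' (ltn_ord i')).
  by rewrite /= rf0 rf1 rf'0 rf'1 sf0 sf1 sf'0 sf'1.
case/eqP: neqTT'; rewrite -eq_ii'; congr (_, _); apply/ffunP => j.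
by case: (ord2P j) => ->; rewrite -?rf0 -?rf1 -?rf'0 -?rf'1 eq_ii'.
Qed.

Lemma layers_cda_optimum : isOptimumCDA d 2 layers_cda.
Proof.
split=> //; split=> [T | S T card_S].
  by rewrite -card_gt0 card_rho_layers addn1.
apply: almost_disjoint_subset_bigcup; last by rewrite card_S card_rho_layers addn1.
by move=> T' neqT'T; apply: card_rhoI_layers; rewrite eq_sym.
Qed.

End CDAFromLayers.

Definition layered_array_transport (V W : finType) :
  #|V| = #|W| -> layered_array V -> layered_array W.
Proof.
move=> eqVW L; pose f (x : V) : W := enum_val (cast_ord eqVW (enum_rank x)).
have f_inj : injective f by move=> x y /enum_val_inj/cast_ord_inj/enum_rank_inj.
apply: (@LayeredArray W (rows L) (fun k r => f (entry L k r)) (f \o layer L)).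
- by rewrite card_rows eqVW.
- move=> i lti5 r s /= [/f_inj e1 /f_inj e2 /f_inj e3].
  by apply: (entry_layer_inj L lti5); rewrite /= e1 e2 e3.
- move=> i j ltij ltj5 r s /= [/f_inj e1 /f_inj e2 /f_inj e3 /f_inj e4].
  by apply: (entry_pairs_inj L ltij ltj5); rewrite /= e1 e2 e3 e4.
Defined.

Definition layered_array_prod (V1 V2 : finType) :
  layered_array V1 -> layered_array V2 -> layered_array (V1 * V2)%type.
Proof.
move=> L1 L2.
apply: (@LayeredArray _ (rows L1 * rows L2)%type
  (fun k r => (entry L1 k r.1, entry L2 k r.2))
  (fun r => (layer L1 r.1, layer L2 r.2))).
- by rewrite !card_prod !card_rows expnMn.
- move=> i lti5 [r1 r2] [s1 s2] /= [e1 e2 e3 e4 e5 e6].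
  by congr (_, _);
    [apply: (entry_layer_inj L1 lti5) | apply: (entry_layer_inj L2 lti5)];
    rewrite /= ?e1 ?e2 ?e3 ?e4 ?e5 ?e6.
- move=> i j ltij ltj5 [r1 r2] [s1 s2] /= [e1 e2 e3 e4 e5 e6 e7 e8].
  by congr (_, _);
    [apply: (entry_pairs_inj L1 ltij ltj5) | apply: (entry_pairs_inj L2 ltij ltj5)];
    rewrite /= ?e1 ?e2 ?e3 ?e4 ?e5 ?e6 ?e7 ?e8.
Defined.

Definition layered_array_mul m n :
  layered_array 'I_m -> layered_array 'I_n -> layered_array 'I_(m * n).
Proof.
move=> Lm Ln; apply: layered_array_transport (layered_array_prod Lm Ln).
by rewrite card_prod !card_ord.
Defined.

Section RingLayeredArray.
Local Open Scope ring_scope.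

Variables (R : finUnitRingType) (lam : R).
Hypotheses (lam_unit : lam \is a GRing.unit) (lam1_unit : lam - 1 \is a GRing.unit).

Definition ring_entry (k : nat) (p : R * R * R) : R :=
  let: (x, y, z) := p in
  match k with
  | 0 => x | 1 => y | 2 => z | 3 => x + z | 4 => x + y | _ => z + lam * x
  end.

Definition ring_layer (p : R * R * R) : R := let: (x, y, z) := p in x + y + z.

Lemma sub_triple (x y z x' y' z' : R) :
  (x, y, z) - (x', y', z') = (x - x', y - y', z - z').
Proof. by []. Qed.

Lemma ring_entryB k p q : ring_entry k (p - q) = ring_entry k p - ring_entry k q.
Proof.
case: p q => [[x y] z] [[x' y'] z']; rewrite sub_triple.
by case: k => [|[|[|[|[|k]]]]] //=; rewrite ?mulrBr opprD addrACA.
Qed.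

Lemma ring_layerB p q : ring_layer (p - q) = ring_layer p - ring_layer q.
Proof.
case: p q => [[x y] z] [[x' y'] z']; rewrite sub_triple /=.
by rewrite !opprD (addrACA (x + y)) (addrACA x).
Qed.

Lemma unit_mul_eq0 (u x : R) : u \is a GRing.unit -> u * x = 0 -> x = 0.
Proof. by move=> u_unit /eqP; rewrite (mulrI_eq0 _ (mulrI u_unit)) => /eqP. Qed.

Lemma ring_entry_layer_ker i p : (i < 5)%N ->
  ring_entry i p = 0 -> ring_entry i.+1 p = 0 -> ring_layer p = 0 -> p = 0.
Proof.
case: p => [[x y] z]; case: i => [|[|[|[|[|//]]]]] _ /=.
- by move=> -> ->; rewrite !add0r => ->.
- by move=> -> ->; rewrite !addr0 => ->.
- by move=> ->; rewrite addr0 => ->; rewrite add0r addr0 => ->.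
- move=> exz exy; rewrite exy add0r => ez; move: exz exy.
  by rewrite ez addr0 => ->; rewrite add0r => ->.
- move=> exy elx; rewrite exy add0r => ez; move: elx exy.
  by rewrite ez add0r => /(unit_mul_eq0 lam_unit) ->; rewrite add0r => ->.
Qed.

Lemma ring_entry_pairs_ker i j p : (i < j)%N -> (j < 5)%N ->
  ring_entry i p = 0 -> ring_entry i.+1 p = 0 ->
  ring_entry j p = 0 -> ring_entry j.+1 p = 0 -> p = 0.
Proof.
case: p => [[x y] z].
case: i => [|[|[|[|//]]]]; case: j => [|[|[|[|[|//]]]]] // _ _ /=.
- by move=> -> -> _ ->.
- by move=> -> -> ->.
- by move=> -> ->; rewrite add0r => ->.
- by move=> -> -> _; rewrite mulr0 addr0 => ->.
- by move=> -> -> _; rewrite addr0 => ->.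
- by move=> -> ->; rewrite addr0 => ->.
- by move=> -> -> ; rewrite addr0 => ->.
- by move=> ->; rewrite addr0 => -> _; rewrite add0r => ->.
- by move=> ->; rewrite addr0 => ->; rewrite add0r => ->.
- move=> /eqP; rewrite addr_eq0 => /eqP ex exy _ /eqP.
  rewrite addrC addr_eq0 => /eqP elx.
  (* (lam - 1) x = (z + lam x) - (x + z) *)
  have x0 : x = 0.
    by apply: (unit_mul_eq0 lam1_unit); rewrite mulrBl mul1r elx ex subrr.
  by move: ex exy; rewrite x0 add0r => /esym /eqP; rewrite oppr_eq0 => /eqP -> ->.
Qed.

Definition ring_layered_array : layered_array R.
Proof.
apply: (@LayeredArray R (R * R * R)%type ring_entry ring_layer).
- by rewrite !card_prod -!mulnA.
- move=> i lti5 p q [e1 e2 e3]; apply/subr0_eq/(ring_entry_layer_ker lti5).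
  + by rewrite ring_entryB e1 subrr.
  + by rewrite ring_entryB e2 subrr.
  + by rewrite ring_layerB e3 subrr.
- move=> i j ltij ltj5 p q [e1 e2 e3 e4].
  apply/subr0_eq/(ring_entry_pairs_ker ltij ltj5); rewrite ring_entryB.
  + by rewrite e1 subrr.
  + by rewrite e2 subrr.
  + by rewrite e3 subrr.
  + by rewrite e4 subrr.
Defined.

End RingLayeredArray.

Definition field_layered_array (F : finFieldType) : 2 < #|F| -> layered_array F.
Proof.
move=> card_gt2.
have /sigW[lam /andP[lam_neq0 lam_neq1]] : exists lam : F, (lam != 0%R) && (lam != 1%R).
  apply/existsP; apply: contraTT card_gt2 => /existsPn all01; rewrite -leqNgt.
  apply: (@leq_trans #|[set 0%R; 1%R] : {set F}|); last by rewrite cards2 ltnS leq_b1.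
  apply/subset_leq_card/subsetP => x _; move: (all01 x).
  by rewrite !inE negb_and !negbK orbC.
apply: (ring_layered_array (lam := lam)); first by rewrite unitfE.
by rewrite unitfE subr_eq0.
Defined.

Definition odd_layered_array m : 1 < m -> odd m -> layered_array 'I_m.
Proof.
move=> m_gt1 m_odd; apply: (layered_array_transport (V := 'Z_m)).
  by rewrite !card_ord Zp_cast.
apply: (ring_layered_array (lam := (2%:R)%R)); first by rewrite unitZpE // coprimen2.
by rewrite -addn1 natrD addrK unitr1.
Defined.

Definition pow2_layered_array a : 1 < a -> layered_array 'I_(2 ^ a).
Proof.
move=> a_gt1; have [F _ cardF] := pPrimePowerField (isT : prime 2) (ltnW a_gt1).
apply: (layered_array_transport (V := F)); first by rewrite cardF card_ord.
by apply: field_layered_array; rewrite cardF (ltn_exp2l 1).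
Defined.

Lemma two_part_decomposition v : 0 < v -> v = 2 ^ logn 2 v * v`_2^' /\ odd v`_2^'.
Proof. by move=> v_gt0; rewrite -p_part partnC // odd_2'nat part_pnat. Qed.

Definition ord_layered_array v : 1 < v -> v %% 4 != 2 -> layered_array 'I_v.
Proof.
move=> v_gt1 v_mod4; have [v_eq m_odd] := two_part_decomposition (ltnW v_gt1).
rewrite v_eq in v_gt1 v_mod4 *.
move: (logn 2 v) (v`_2^') m_odd v_gt1 v_mod4 => [|[|a]] [|[|m]] // m_odd v_gt1 v_mod4.
- by rewrite mul1n; apply: odd_layered_array.
- by exfalso; move: v_mod4 m_odd; rewrite expn1; lia.
- by rewrite muln1; apply: pow2_layered_array.
- exact: layered_array_mul (pow2_layered_array _) (odd_layered_array _ m_odd).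
Defined.

Theorem mainTheorem12 (v : nat) (hv : 4 <= v) (hmod : v %% 4 != 2)
  (d : nat) (hd : 0 < d) (hdv : d + 1 <= v) :
  exists A : 'M['I_v]_((d + 1) * v ^ 2, 6), isOptimumCDA d 2 A.
Proof.
have L := ord_layered_array (leq_trans (isT : 1 < 4) hv) hmod.
pose D := [set widen_ord hdv j | j : 'I_(d + 1)].
have card_D : #|D| = d + 1.
  by rewrite card_imset ?card_ord // => j k /(congr1 val) /= eq_jk; apply: val_inj.
by exists (layers_cda L card_D); apply: layers_cda_optimum.
Qed.
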